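(* Let $\varphi$ be an $\mathcal L$-sentence with $\mathbb N\models\Pi(\ulcorner\varphi\urcorner)$, and let $\alpha$ be an ordinal such that $(T_\alpha,P_\alpha)$ is consistent. Then both sequents $\varphi\Rightarrow\neg\mathrm T\varphi$ and $\neg\mathrm T\varphi\Rightarrow\varphi$ hold in $(\mathbb N,T_\alpha,P_\alpha)$.
   Context: Language. Let $\mathcal L_{\mathbb N}$ be the language of first-order Peano arithmetic and $\mathcal L=\mathcal L_{\mathbb N}\cup\{\mathrm T,\mathrm P\}$ with unary predicates $\mathrm T,\mathrm P$. $\mathcal L$-formulas are in Tait style: literals are $s=t$, $s\neq t$, $\mathrm Tt$, $\neg\mathrm Tt$, $\mathrm Pt$, $\neg\mathrm Pt$; formulas are built from literals by $\wedge,\vee,\forall,\exists$; negation of an arbitrary formula is defined by De Morgan dualities with $\neg\neg\varphi:=\varphi$. A standard Gödel numbering is fixed; $\#e$ is the code of $e$, $\ulcorner e\urcorner$ the numeral of $\#e$, $\mathrm{val}(t)$ the value of a closed term $t$, $\dot\neg$ the primitive recursive function with $\dot\neg(\#\varphi)=\#\neg\varphi$; $\mathrm T\varphi,\mathrm P\varphi$ abbreviate $\mathrm T\ulcorner\varphi\urcorner,\mathrm P\ulcorner\varphi\urcorner$. Semantics. A partial model is $(\mathbb N,T,P)$ with $\mathbb N$ the standard model and $T=(T^+,T^-)$, $P=(P^+,P^-)$ pairs of subsets of $\omega$. Strong Kleene satisfaction $\models_{SK}$: arithmetic literals evaluated in $\mathbb N$; $\mathrm Tt$ satisfied iff $\mathrm{val}(t)\in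 T^+$, $\neg\mathrm Tt$ iff $\mathrm{val}(t)\in T^-$, likewise for $\mathrm P$ with $P^\pm$; conjunction iff both, disjunction iff at least one, $\forall x\varphi(x)$ iff all numeral instances, $\exists x\varphi(x)$ iff some numeral instance. A sequent $\Gamma\Rightarrow\Delta$ of sentences holds in $(\mathbb N,T,P)$ iff, whenever all members of $\Gamma$ are satisfied, some member of $\Delta$ is. $(T,P)$ is consistent iff $T^+\cap T^-=\emptyset$ and $P^+\cap P^-=\emptyset$. Base paradoxicality. $\mathrm{PA}[\mathrm{SK}]$ is the two-sided sequent calculus for Strong Kleene logic with identity in $\mathcal L$ (initial sequents $\varphi\Rightarrow\varphi$, cut, weakening, the rule from $\Gamma\Rightarrow\Delta,\varphi$ infer $\neg\varphi,\Gamma\Rightarrow\Delta$, usual rules for $\wedge,\vee,\forall,\exists$, reflexivity $\Rightarrow t=t$, replacement from $\Gamma\Rightarrow\Delta,\varphi(t)$ infer $\Gamma\Rightarrow\Delta,s\neq t,\varphi(s)$) plus the initial sequents of Peano arithmetic and the induction rule for all $\mathcal L$-formulas. A sentence $\varphi$ is base paradoxical iff $\mathrm{PA}[\mathrm{SK}]$ derives $\varphi\Leftrightarrow\neg\mathrm T\varphi$ and $\neg\varphi\Leftrightarrow\mathrm T\varphi$ ($\Leftrightarrow$ meaning both sequents). $B(x)$ is an $\mathcal L_{\mathbb N}$-formula defining in $\mathbb N$ the set of codes of base paradoxical sentences, and $\Pi(x):=B(x)\vee B(\dot\neg x)$. Jump and sequence. Let $\mathscr P(x)$ be the $\mathcal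 L$-formula which is the disjunction of: (1) $x$ codes a sentence and $\Pi(x)$; (2) $x$ codes a sentence $\mathrm Tt$ ($t$ a closed term) and $\mathrm P(\mathrm{val}(t))$; (3) $x$ codes a sentence $\neg\mathrm Tt$ and $\mathrm P(\mathrm{val}(t))$; (4) $x$ codes a sentence $\psi\wedge\theta$ and $(\mathrm P\psi\wedge\mathrm P\theta)\vee(\mathrm T\psi\wedge\mathrm P\theta)\vee(\mathrm T\theta\wedge\mathrm P\psi)$; (5) $x$ codes a sentence $\psi\vee\theta$ and $(\mathrm P\psi\wedge\mathrm P\theta)\vee(\neg\mathrm T\psi\wedge\mathrm P\theta)\vee(\neg\mathrm T\theta\wedge\mathrm P\psi)$; (6) $x$ codes a sentence $\forall v\psi$ and $\exists y\,\mathrm P\psi(\dot y)\wedge\forall y(\mathrm P\psi(\dot y)\vee\mathrm T\psi(\dot y))$; (7) $x$ codes a sentence $\exists v\psi$ and $\exists y\,\mathrm P\psi(\dot y)\wedge\forall y(\mathrm P\psi(\dot y)\vee\neg\mathrm T\psi(\dot y))$; here $\psi(\dot y)$ is the code of the result of substituting the numeral of $y$ for $v$. Write $\mathscr P(\varphi)$ for $\mathscr P(\ulcorner\varphi\urcorner)$. Define $\Gamma_{\mathscr{TP}}(T,P)=\big((\{\#\varphi:(\mathbb N,T,P)\models_{SK}\varphi\},\{\#\varphi:(\mathbb N,T,P)\models_{SK}\neg\varphi\}),(\{\#\varphi:(\mathbb N,T,P)\models_{SK}\mathscr P(\varphi)\},\{\#\varphi:(\mathbb N,T,P)\models_{SK}\varphi\vee\neg\varphi\})\big)$,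 $\varphi$ ranging over $\mathcal L$-sentences. Define $(T_0,P_0)=((\emptyset,\emptyset),(\emptyset,\emptyset))$, $(T_{\beta+1},P_{\beta+1})=\Gamma_{\mathscr{TP}}(T_\beta,P_\beta)$, $(T_\lambda,P_\lambda)=\bigcup_{\beta<\lambda}(T_\beta,P_\beta)$ (componentwise union) for limit $\lambda$. *)

From Stdlib Require Import List Arith.
Import ListNotations.

Inductive term : Type :=
| tvar  : nat -> term
| tzero : term
| tsucc : term -> term
| tplus : term -> term -> term
| tmult : term -> term -> term.

(* Tait-style L-formulas: literals closed under /\, \/, forall, exists *)
Inductive formula : Type :=
| fEq  : term -> term -> formula
| fNeq : term -> term -> formula
| fT   : term -> formula
| fNT  : term -> formula
| fP   : term -> formula
| fNP  : term -> formula
| fAnd : formula -> formula -> formula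
| fOr  : formula -> formula -> formula
| fAll : formula -> formula      (* binds de Bruijn index 0 *)
| fEx  : formula -> formula.

Fixpoint neg (f : formula) : formula :=
  match f with
  | fEq s t => fNeq s t | fNeq s t => fEq s t
  | fT t => fNT t | fNT t => fT t
  | fP t => fNP t | fNP t => fP t
  | fAnd a b => fOr (neg a) (neg b)
  | fOr a b => fAnd (neg a) (neg b)
  | fAll a => fEx (neg a)
  | fEx a => fAll (neg a)
  end.

Fixpoint tsubst (s : nat -> term) (t : term) : term :=
  match t with
  | tvar i => s i
  | tzero => tzero
  | tsucc u => tsucc (tsubst s u)
  | tplus u v => tplus (tsubst s u) (tsubst s v)
  | tmult u v => tmult (tsubst s u) (tsubst s v)
  end.

Definition scons (t : term) (s : nat -> term) : nat -> term :=
  fun i => match i with 0 => t | S j => s j end.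

Definition shiftS : nat -> term := fun i => tvar (S i).

Definition up (s : nat -> term) : nat -> term :=
  scons (tvar 0) (fun i => tsubst shiftS (s i)).

Fixpoint fsubst (s : nat -> term) (f : formula) : formula :=
  match f with
  | fEq a b => fEq (tsubst s a) (tsubst s b)
  | fNeq a b => fNeq (tsubst s a) (tsubst s b)
  | fT a => fT (tsubst s a) | fNT a => fNT (tsubst s a)
  | fP a => fP (tsubst s a) | fNP a => fNP (tsubst s a)
  | fAnd a b => fAnd (fsubst s a) (fsubst s b)
  | fOr a b => fOr (fsubst s a) (fsubst s b)
  | fAll a => fAll (fsubst (up s) a)
  | fEx a => fEx (fsubst (up s) a)
  end.

Definition sub1 (t : term) (f : formula) : formula := fsubst (scons t tvar) f.
Definition shiftF (f : formula) : formula := fsubst shiftS f.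
Definition shiftL (l : list formula) : list formula := map shiftF l.

Fixpoint tclosed (k : nat) (t : term) : bool :=
  match t with
  | tvar i => Nat.ltb i k
  | tzero => true
  | tsucc u => tclosed k u
  | tplus u v | tmult u v => tclosed k u && tclosed k v
  end.

Fixpoint fclosed (k : nat) (f : formula) : bool :=
  match f with
  | fEq a b | fNeq a b => tclosed k a && tclosed k b
  | fT a | fNT a | fP a | fNP a => tclosed k a
  | fAnd a b | fOr a b => fclosed k a && fclosed k b
  | fAll a | fEx a => fclosed (S k) a
  end.

Definition sentence (f : formula) : Prop := fclosed 0 f = true.
Definition closed_term (t : term) : Prop := tclosed 0 t = true.

Fixpoint num (n : nat) : term :=
  match n with 0 => tzero | S m => tsucc (num m) end.

Definition inst (f : formula) (n : nat) : formula := sub1 (num n) f.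

(* value of a closed term in the standard model (variables, which never
   occur in closed terms, are sent to 0) *)
Fixpoint val (t : term) : nat :=
  match t with
  | tvar _ => 0
  | tzero => 0
  | tsucc u => S (val u)
  | tplus u v => val u + val v
  | tmult u v => val u * val v
  end.

Definition cpair (a b : nat) : nat := (a + b) * (a + b + 1) / 2 + b.

Fixpoint tcode (t : term) : nat :=
  match t with
  | tvar i => cpair 0 i
  | tzero => cpair 1 0
  | tsucc u => cpair 2 (tcode u)
  | tplus u v => cpair 3 (cpair (tcode u) (tcode v))
  | tmult u v => cpair 4 (cpair (tcode u) (tcode v))
  end.

Fixpoint code (f : formula) : nat :=
  match f with
  | fEq a b => cpair 0 (cpair (tcode a) (tcode b))
  | fNeq a b => cpair 1 (cpair (tcode a) (tcode b))
  | fT a => cpair 2 (tcode a)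
  | fNT a => cpair 3 (tcode a)
  | fP a => cpair 4 (tcode a)
  | fNP a => cpair 5 (tcode a)
  | fAnd a b => cpair 6 (cpair (code a) (code b))
  | fOr a b => cpair 7 (cpair (code a) (code b))
  | fAll a => cpair 8 (code a)
  | fEx a => cpair 9 (code a)
  end.

Definition gq (f : formula) : term := num (code f).

Record pmodel : Type := PModel {
  Tpos : nat -> Prop; Tneg : nat -> Prop;
  Ppos : nat -> Prop; Pneg : nat -> Prop }.

Inductive SK (M : pmodel) : formula -> Prop :=
| SK_eq   s t : val s = val t -> SK M (fEq s t)
| SK_neq  s t : val s <> val t -> SK M (fNeq s t)
| SK_T    t : Tpos M (val t) -> SK M (fT t)
| SK_NT   t : Tneg M (val t) -> SK M (fNT t)
| SK_P    t : Ppos M (val t) -> SK M (fP t)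
| SK_NP   t : Pneg M (val t) -> SK M (fNP t)
| SK_and  a b : SK M a -> SK M b -> SK M (fAnd a b)
| SK_orl  a b : SK M a -> SK M (fOr a b)
| SK_orr  a b : SK M b -> SK M (fOr a b)
| SK_all  a : (forall n, SK M (inst a n)) -> SK M (fAll a)
| SK_ex   a n : SK M (inst a n) -> SK M (fEx a).

Definition holds (M : pmodel) (G D : list formula) : Prop :=
  (forall g, In g G -> SK M g) -> exists d, In d D /\ SK M d.

Definition consistent (M : pmodel) : Prop :=
  (forall n, ~ (Tpos M n /\ Tneg M n)) /\ (forall n, ~ (Ppos M n /\ Pneg M n)).

Inductive PASK : list formula -> list formula -> Prop :=
| r_init f : PASK [f] [f]
| r_cut G D f : PASK G (f :: D) -> PASK (f :: G) D -> PASK G D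
| r_weak G D G' D' : PASK G D -> incl G G' -> incl D D' -> PASK G' D'
| r_negL G D f : PASK G (f :: D) -> PASK (neg f :: G) D
| r_andL G D a b : PASK (a :: b :: G) D -> PASK (fAnd a b :: G) D
| r_andR G D a b : PASK G (a :: D) -> PASK G (b :: D) -> PASK G (fAnd a b :: D)
| r_orL G D a b : PASK (a :: G) D -> PASK (b :: G) D -> PASK (fOr a b :: G) D
| r_orR G D a b : PASK G (a :: b :: D) -> PASK G (fOr a b :: D)
| r_allL G D a t : PASK (sub1 t a :: G) D -> PASK (fAll a :: G) D
| r_allR G D a : PASK (shiftL G) (a :: shiftL D) -> PASK G (fAll a :: D)
| r_exL G D a : PASK (a :: shiftL G) (shiftL D) -> PASK (fEx a :: G) D
| r_exR G D a t : PASK G (sub1 t a :: D) -> PASK G (fEx a :: D)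
| r_refl t : PASK [] [fEq t t]
| r_repl G D f s t : PASK G (sub1 t f :: D) -> PASK G (fNeq s t :: sub1 s f :: D)
| r_pa1 t : PASK [] [fNeq (tsucc t) tzero]
| r_pa2 s t : PASK [fEq (tsucc s) (tsucc t)] [fEq s t]
| r_pa3 t : PASK [] [fEq (tplus t tzero) t]
| r_pa4 s t : PASK [] [fEq (tplus s (tsucc t)) (tsucc (tplus s t))]
| r_pa5 t : PASK [] [fEq (tmult t tzero) tzero]
| r_pa6 s t : PASK [] [fEq (tmult s (tsucc t)) (tplus (tmult s t) s)]
| r_ind G D f t :
    PASK (f :: shiftL G) (fsubst (scons (tsucc (tvar 0)) shiftS) f :: shiftL D) ->
    PASK (sub1 tzero f :: G) (sub1 t f :: D).

Definition base_paradoxical (f : formula) : Prop :=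
  sentence f /\
  PASK [f] [fNT (gq f)] /\ PASK [fNT (gq f)] [f] /\
  PASK [neg f] [fT (gq f)] /\ PASK [fT (gq f)] [neg f].

Definition Bset (n : nat) : Prop :=
  exists f, sentence f /\ code f = n /\ base_paradoxical f.

(* N |= Pi(⌜phi⌝) where Pi(x) := B(x) \/ B(neg-dot x) and neg-dot(#phi) = #(neg phi) *)
Definition Pi_holds (f : formula) : Prop := Bset (code f) \/ Bset (code (neg f)).

Definition calP_sat (M : pmodel) (f : formula) : Prop :=
  Pi_holds f
  \/ (exists t, closed_term t /\ f = fT t /\ Ppos M (val t))
  \/ (exists t, closed_term t /\ f = fNT t /\ Ppos M (val t))
  \/ (exists a b, f = fAnd a b /\
        ((Ppos M (code a) /\ Ppos M (code b)) \/ (Tpos M (code a) /\ Ppos M (code b))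
         \/ (Tpos M (code b) /\ Ppos M (code a))))
  \/ (exists a b, f = fOr a b /\
        ((Ppos M (code a) /\ Ppos M (code b)) \/ (Tneg M (code a) /\ Ppos M (code b))
         \/ (Tneg M (code b) /\ Ppos M (code a))))
  \/ (exists a, f = fAll a /\
        (exists y, Ppos M (code (inst a y))) /\
        (forall y, Ppos M (code (inst a y)) \/ Tpos M (code (inst a y))))
  \/ (exists a, f = fEx a /\
        (exists y, Ppos M (code (inst a y))) /\
        (forall y, Ppos M (code (inst a y)) \/ Tneg M (code (inst a y)))).

Definition jump (M : pmodel) : pmodel := {|
  Tpos := fun n => exists f, sentence f /\ code f = n /\ SK M f;
  Tneg := fun n => exists f, sentence f /\ code f = n /\ SK M (neg f);
  Ppos := fun n => exists f, sentence f /\ code f = n /\ calP_sat M f;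
  Pneg := fun n => exists f, sentence f /\ code f = n /\ SK M (fOr f (neg f)) |}.

(* The stage at w is (T_alpha, P_alpha) where alpha is the order type of
   {v | lt v w}: successor stage if w has an immediate predecessor, otherwise
   the union of the earlier stages (empty when w is least). *)
Definition imm_pred {W : Type} (lt : W -> W -> Prop) (p w : W) : Prop :=
  lt p w /\ ~ (exists v, lt p v /\ lt v w).

Definition stage_step {W : Type} (lt : W -> W -> Prop) (w : W)
    (rec : forall v, lt v w -> pmodel) : pmodel :=
  let comp (sel : pmodel -> nat -> Prop) (n : nat) : Prop :=
    (exists p (h : lt p w), imm_pred lt p w /\ sel (jump (rec p h)) n)
    \/ ((~ exists p, imm_pred lt p w) /\ exists v (h : lt v w), sel (rec v h) n) in
  {| Tpos := comp Tpos; Tneg := comp Tneg; Ppos := comp Ppos; Pneg := comp Pneg |}.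

Definition stage {W : Type} (lt : W -> W -> Prop) (wf : well_founded lt) : W -> pmodel :=
  Fix wf (fun _ => pmodel) (stage_step lt).

(* If phi is base paradoxical, both sequents are derivable in PA[SK], and PA[SK]
   is sound for every consistent partial model over the standard model
   (consistency is exactly what validates the left negation rule).
   If instead ~phi is base paradoxical, soundness gives phi <=> T<~phi> in the
   model, and every stage satisfies ~T<phi> iff T<~phi>: the jump puts #phi into
   the antiextension of T exactly when it puts #~phi into the extension, and
   limit stages are unions. *)
From Stdlib Require Import List Arith Lia Classical FunctionalExtensionality.
Import ListNotations.

Lemma triangle_succ s : (s + 1) * (s + 1 + 1) / 2 = s * (s + 1) / 2 + (s + 1).
Proof.
  replace ((s + 1) * (s + 1 + 1)) with (s * (s + 1) + (s + 1) * 2) by ring.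
  rewrite Nat.div_add; lia.
Qed.

Lemma triangle_gap s1 s2 : s1 < s2 -> s1 * (s1 + 1) / 2 + s1 < s2 * (s2 + 1) / 2.
Proof.
  intro Hlt.
  assert (Hle : (s1 + 1) * (s1 + 1 + 1) / 2 <= s2 * (s2 + 1) / 2)
    by (apply Nat.Div0.div_le_mono; nia).
  rewrite triangle_succ in Hle. lia.
Qed.

Lemma cpair_inj a b c d : cpair a b = cpair c d -> a = c /\ b = d.
Proof.
  unfold cpair. intro H.
  destruct (lt_eq_lt_dec (a + b) (c + d)) as [[Hlt | Heq] | Hlt].
  - pose proof (triangle_gap _ _ Hlt). lia.
  - rewrite Heq in H. lia.
  - pose proof (triangle_gap _ _ Hlt). lia.
Qed.

Lemma tcode_inj : forall t u, tcode t = tcode u -> t = u.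
Proof.
  induction t; destruct u; cbn [tcode]; intro H; apply cpair_inj in H as [Htag H];
    try discriminate Htag; try (apply cpair_inj in H as [H1 H2]); f_equal; auto.
Qed.

Lemma code_inj : forall f g, code f = code g -> f = g.
Proof.
  induction f; destruct g; cbn [code]; intro H; apply cpair_inj in H as [Htag H];
    try discriminate Htag; try (apply cpair_inj in H as [H1 H2]);
    f_equal; auto using tcode_inj.
Qed.

Lemma neg_involutive f : neg (neg f) = f.
Proof. induction f; cbn; rewrite ?IHf, ?IHf1, ?IHf2; auto. Qed.

Lemma fclosed_neg : forall f k, fclosed k (neg f) = fclosed k f.
Proof. induction f; intro k; cbn; rewrite ?IHf1, ?IHf2; auto. Qed.

Lemma sentence_neg f : sentence (neg f) <-> sentence f.
Proof. unfold sentence. rewrite fclosed_neg. reflexivity. Qed.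

Lemma val_num n : val (num n) = n.
Proof. induction n; cbn; auto. Qed.

Lemma tsubst_tsubst : forall t s r,
  tsubst r (tsubst s t) = tsubst (fun i => tsubst r (s i)) t.
Proof. induction t; intros; cbn; rewrite ?IHt, ?IHt1, ?IHt2; auto. Qed.

Lemma tsubst_tvar : forall t, tsubst tvar t = t.
Proof. induction t; cbn; rewrite ?IHt, ?IHt1, ?IHt2; auto. Qed.

Lemma up_comp s r : (fun i => tsubst (up r) (up s i)) = up (fun i => tsubst r (s i)).
Proof.
  apply functional_extensionality; intros [|j]; cbn; auto.
  unfold up, scons. rewrite !tsubst_tsubst. reflexivity.
Qed.

Lemma fsubst_fsubst : forall f s r,
  fsubst r (fsubst s f) = fsubst (fun i => tsubst r (s i)) f.
Proof.
  induction f; intros; cbn; rewrite ?tsubst_tsubst, ?IHf, ?IHf1, ?IHf2, ?up_comp; auto.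
Qed.

Lemma up_tvar : up tvar = tvar.
Proof. apply functional_extensionality; intros [|j]; reflexivity. Qed.

Lemma fsubst_tvar : forall f, fsubst tvar f = f.
Proof. induction f; cbn; rewrite ?tsubst_tvar, ?up_tvar; congruence. Qed.

Lemma inst_up a s n : inst (fsubst (up s) a) n = fsubst (scons (num n) s) a.
Proof.
  unfold inst, sub1. rewrite fsubst_fsubst. f_equal.
  apply functional_extensionality; intros [|j]; cbn; auto.
  unfold up, scons. rewrite tsubst_tsubst. apply tsubst_tvar.
Qed.

Lemma fsubst_scons_shiftF u s g : fsubst (scons u s) (shiftF g) = fsubst s g.
Proof. unfold shiftF. rewrite fsubst_fsubst. reflexivity. Qed.

Lemma val_tsubst_ext : forall t s r, (forall i, val (s i) = val (r i)) ->
  val (tsubst s t) = val (tsubst r t).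
Proof. induction t; intros; cbn; auto. Qed.

Lemma SK_eq_iff M s t : SK M (fEq s t) <-> val s = val t.
Proof. split; [intro H; inversion H | constructor]; auto. Qed.

Lemma SK_neq_iff M s t : SK M (fNeq s t) <-> val s <> val t.
Proof. split; [intro H; inversion H | constructor]; auto. Qed.

Lemma SK_T_iff M t : SK M (fT t) <-> Tpos M (val t).
Proof. split; [intro H; inversion H | constructor]; auto. Qed.

Lemma SK_NT_iff M t : SK M (fNT t) <-> Tneg M (val t).
Proof. split; [intro H; inversion H | constructor]; auto. Qed.

Lemma SK_P_iff M t : SK M (fP t) <-> Ppos M (val t).
Proof. split; [intro H; inversion H | constructor]; auto. Qed.

Lemma SK_NP_iff M t : SK M (fNP t) <-> Pneg M (val t).
Proof. split; [intro H; inversion H | constructor]; auto. Qed.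

Lemma SK_and_iff M a b : SK M (fAnd a b) <-> SK M a /\ SK M b.
Proof. split; [intro H; inversion H | intros []; constructor]; auto. Qed.

Lemma SK_or_iff M a b : SK M (fOr a b) <-> SK M a \/ SK M b.
Proof.
  split; [intro H; inversion H | intros []]; auto using SK_orl, SK_orr.
Qed.

Lemma SK_all_iff M a : SK M (fAll a) <-> forall n, SK M (inst a n).
Proof. split; [intro H; inversion H | constructor]; auto. Qed.

Lemma SK_ex_iff M a : SK M (fEx a) <-> exists n, SK M (inst a n).
Proof. split; [intro H; inversion H | intros [n Hn]; apply (SK_ex _ _ n)]; eauto. Qed.

Lemma SK_T_gq M f : SK M (fT (gq f)) <-> Tpos M (code f).
Proof. unfold gq. rewrite SK_T_iff, val_num. reflexivity. Qed.

Lemma SK_NT_gq M f : SK M (fNT (gq f)) <-> Tneg M (code f).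
Proof. unfold gq. rewrite SK_NT_iff, val_num. reflexivity. Qed.

Lemma holds_single M a b : holds M [a] [b] <-> (SK M a -> SK M b).
Proof.
  unfold holds. split.
  - intros H Ha. destruct H as [d [[<- | []] Hd]]; auto. intros g [<- | []]; auto.
  - intros H HG. exists b. split; [left; auto | apply H, HG; left; auto].
Qed.

Tactic Notation "SK_simpl" := rewrite ?SK_eq_iff, ?SK_neq_iff, ?SK_T_iff, ?SK_NT_iff,
  ?SK_P_iff, ?SK_NP_iff, ?SK_and_iff, ?SK_or_iff, ?SK_all_iff, ?SK_ex_iff.

Tactic Notation "SK_simpl" "in" hyp(H) := rewrite ?SK_eq_iff, ?SK_neq_iff, ?SK_T_iff,
  ?SK_NT_iff, ?SK_P_iff, ?SK_NP_iff, ?SK_and_iff, ?SK_or_iff, ?SK_all_iff, ?SK_ex_iff in H.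

Section Soundness.
Variable M : pmodel.

Lemma SK_fsubst_ext : forall f s r, (forall i, val (s i) = val (r i)) ->
  SK M (fsubst s f) -> SK M (fsubst r f).
Proof.
  induction f; intros s r Hsr H; cbn in *; SK_simpl; SK_simpl in H;
    rewrite <- ?(val_tsubst_ext _ s r); auto.
  - destruct H; eauto.
  - destruct H; eauto.
  - intro n. specialize (H n). rewrite inst_up in *.
    apply (IHf (scons (num n) s)); [intros [|j]; cbn; auto | exact H].
  - destruct H as [n H]. exists n. rewrite inst_up in *.
    apply (IHf (scons (num n) s)); [intros [|j]; cbn; auto | exact H].
Qed.

Lemma SK_fsubst_sub1 s t a :
  SK M (fsubst s (sub1 t a)) <-> SK M (fsubst (scons (num (val (tsubst s t))) s) a).
Proof.
  unfold sub1. rewrite fsubst_fsubst.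
  split; apply SK_fsubst_ext; intros [|j]; cbn; auto using val_num.
Qed.

Definition all_sat (e : nat -> term) (G : list formula) : Prop :=
  forall g, In g G -> SK M (fsubst e g).

Definition some_sat (e : nat -> term) (D : list formula) : Prop :=
  exists d, In d D /\ SK M (fsubst e d).

(* Substitutions [e] serve as variable assignments; by [SK_fsubst_ext] only the
   values [val (e i)] matter. *)
Definition valid (G D : list formula) : Prop :=
  forall e, all_sat e G -> some_sat e D.

Lemma all_sat_cons e g G : all_sat e (g :: G) <-> SK M (fsubst e g) /\ all_sat e G.
Proof.
  unfold all_sat. split; [intro H; split; auto with datatypes|].
  intros [Hg HG] x [<- | Hx]; auto.
Qed.

Lemma some_sat_cons e d D : some_sat e (d :: D) <-> SK M (fsubst e d) \/ some_sat e D.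
Proof.
  unfold some_sat. split.
  - intros [x [[<- | Hx] Hs]]; eauto.
  - intros [Hd | [x [Hx Hs]]]; eauto with datatypes.
Qed.

Lemma all_sat_shiftL u e G : all_sat (scons u e) (shiftL G) <-> all_sat e G.
Proof.
  unfold all_sat, shiftL. split; intros H g Hg.
  - rewrite <- (fsubst_scons_shiftF u). apply H, in_map, Hg.
  - apply in_map_iff in Hg as [g0 [<- Hg0]]. rewrite fsubst_scons_shiftF. auto.
Qed.

Lemma some_sat_shiftL u e D : some_sat (scons u e) (shiftL D) <-> some_sat e D.
Proof.
  unfold some_sat, shiftL. split.
  - intros [d [Hd Hs]]. apply in_map_iff in Hd as [d0 [<- Hd0]].
    rewrite fsubst_scons_shiftF in Hs. eauto.
  - intros [d [Hd Hs]]. exists (shiftF d). rewrite fsubst_scons_shiftF. auto using in_map.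
Qed.

Lemma valid_allR G D a : valid (shiftL G) (a :: shiftL D) -> valid G (fAll a :: D).
Proof.
  intros IH e HG. rewrite some_sat_cons.
  destruct (classic (some_sat e D)) as [HD | HnD]; [right; exact HD | left].
  cbn. SK_simpl. intro n. rewrite inst_up.
  specialize (IH (scons (num n) e)).
  rewrite all_sat_shiftL, some_sat_cons, some_sat_shiftL in IH. tauto.
Qed.

Lemma valid_exL G D a : valid (a :: shiftL G) (shiftL D) -> valid (fEx a :: G) D.
Proof.
  intros IH e HG. rewrite all_sat_cons in HG. destruct HG as [Ha HG].
  cbn in Ha. SK_simpl in Ha. destruct Ha as [n Hn]. rewrite inst_up in Hn.
  rewrite <- (some_sat_shiftL (num n)). apply IH.
  rewrite all_sat_cons, all_sat_shiftL. auto.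
Qed.

Lemma valid_ind G D f t :
  valid (f :: shiftL G) (fsubst (scons (tsucc (tvar 0)) shiftS) f :: shiftL D) ->
  valid (sub1 tzero f :: G) (sub1 t f :: D).
Proof.
  intros IH e HG. rewrite all_sat_cons in HG. destruct HG as [Hbase HG].
  rewrite some_sat_cons.
  destruct (classic (some_sat e D)) as [HD | HnD]; [right; exact HD | left].
  assert (Hall : forall n, SK M (fsubst (scons (num n) e) f)).
  { induction n as [|n IHn].
    - apply SK_fsubst_sub1 in Hbase. exact Hbase.
    - specialize (IH (scons (num n) e)).
      rewrite all_sat_cons, all_sat_shiftL, some_sat_cons, some_sat_shiftL in IH.
      destruct IH as [Hstep | HD]; [tauto | | contradiction].
      rewrite fsubst_fsubst in Hstep.
      revert Hstep. apply SK_fsubst_ext. intros [|j]; reflexivity. }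
  apply SK_fsubst_sub1, Hall.
Qed.

Lemma valid_repl G D f s t : valid G (sub1 t f :: D) -> valid G (fNeq s t :: sub1 s f :: D).
Proof.
  intros IH e HG. rewrite !some_sat_cons.
  specialize (IH e HG). rewrite some_sat_cons in IH.
  destruct (Nat.eq_dec (val (tsubst e s)) (val (tsubst e t))) as [Est | Nst].
  - right. rewrite SK_fsubst_sub1, Est, <- SK_fsubst_sub1. exact IH.
  - left. cbn. SK_simpl. exact Nst.
Qed.

Hypothesis M_consistent : consistent M.

Lemma SK_fsubst_neg_exclusive : forall f s,
  SK M (fsubst s f) -> SK M (fsubst s (neg f)) -> False.
Proof.
  destruct M_consistent as [HT HP].
  induction f; intros s H1 H2; cbn in H1, H2; SK_simpl in H1; SK_simpl in H2.
  - contradiction.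
  - contradiction.
  - eapply HT; eauto.
  - eapply HT; eauto.
  - eapply HP; eauto.
  - eapply HP; eauto.
  - destruct H1, H2; eauto.
  - destruct H1, H2; eauto.
  - destruct H2 as [n H2]. specialize (H1 n). rewrite inst_up in H1, H2. eauto.
  - destruct H1 as [n H1]. specialize (H2 n). rewrite inst_up in H1, H2. eauto.
Qed.

Lemma valid_negL G D f : valid G (f :: D) -> valid (neg f :: G) D.
Proof.
  intros IH e HG. rewrite all_sat_cons in HG. destruct HG as [Hneg HG].
  specialize (IH e HG). rewrite some_sat_cons in IH.
  destruct IH as [Hf | HD]; [|exact HD].
  exfalso. exact (SK_fsubst_neg_exclusive f e Hf Hneg).
Qed.

Lemma PASK_valid G D : PASK G D -> valid G D.
Proof.
  induction 1; auto using valid_allR, valid_exL, valid_ind, valid_repl, valid_negL;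
    intros e HG; rewrite ?all_sat_cons in HG; rewrite ?some_sat_cons; cbn in *; SK_simpl.
  - tauto.
  - specialize (IHPASK1 e HG). rewrite some_sat_cons in IHPASK1.
    destruct IHPASK1; auto. apply IHPASK2, all_sat_cons. auto.
  - destruct (IHPASK e) as [d [Hd Hs]]; [intros g Hg; auto | exists d; auto].
  - SK_simpl in HG. apply IHPASK. rewrite !all_sat_cons. tauto.
  - specialize (IHPASK1 e HG). specialize (IHPASK2 e HG).
    rewrite some_sat_cons in IHPASK1, IHPASK2. tauto.
  - SK_simpl in HG. destruct HG as [[Ha | Hb] HG];
      [apply IHPASK1 | apply IHPASK2]; apply all_sat_cons; auto.
  - specialize (IHPASK e HG). rewrite !some_sat_cons in IHPASK. tauto.
  - SK_simpl in HG. destruct HG as [Ha HG].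
    apply IHPASK, all_sat_cons. rewrite SK_fsubst_sub1, <- inst_up. auto.
  - specialize (IHPASK e HG). rewrite some_sat_cons in IHPASK.
    destruct IHPASK as [Ha | HD]; [left | auto].
    exists (val (tsubst e t)). rewrite inst_up, <- SK_fsubst_sub1. exact Ha.
  - left. reflexivity.
  - left. cbn. lia.
  - SK_simpl in HG. left. cbn in *. lia.
  - left. cbn. lia.
  - left. cbn. lia.
  - left. cbn. lia.
  - left. cbn. lia.
Qed.

Lemma PASK_holds G D : PASK G D -> holds M G D.
Proof.
  intros Hder HG. destruct (PASK_valid G D Hder tvar) as [d [Hd Hs]].
  - intros g Hg. rewrite fsubst_tvar. auto.
  - rewrite fsubst_tvar in Hs. eauto.
Qed.

Lemma base_paradoxical_iff f : base_paradoxical f ->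
  (SK M f <-> SK M (fNT (gq f))) /\ (SK M (neg f) <-> SK M (fT (gq f))).
Proof.
  intros [_ [H1 [H2 [H3 H4]]]].
  split; split; apply holds_single, PASK_holds; assumption.
Qed.

End Soundness.

Lemma Bset_code f : Bset (code f) -> base_paradoxical f.
Proof. intros [g [_ [Hcode Hbp]]]. apply code_inj in Hcode. subst. exact Hbp. Qed.

Lemma jump_Tneg_Tpos M f : Tneg (jump M) (code f) <-> Tpos (jump M) (code (neg f)).
Proof.
  cbn. split; intros [g [Hs [Hcode H]]]; apply code_inj in Hcode; subst.
  - exists (neg f). rewrite sentence_neg. auto.
  - exists f. rewrite sentence_neg in Hs. auto.
Qed.

Lemma stage_unfold W (lt : W -> W -> Prop) (wf : well_founded lt) w :
  stage lt wf w = stage_step lt w (fun v _ => stage lt wf v).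
Proof.
  unfold stage. apply (Fix_eq wf (fun _ => pmodel) (stage_step lt)).
  intros x f g Hfg. replace g with f; [reflexivity|].
  apply functional_extensionality_dep; intro v.
  apply functional_extensionality_dep; intro h. auto.
Qed.

Lemma stage_Tneg_Tpos W (lt : W -> W -> Prop) (wf : well_founded lt) w f :
  Tneg (stage lt wf w) (code f) <-> Tpos (stage lt wf w) (code (neg f)).
Proof.
  revert f. induction w as [w IH] using (well_founded_induction wf). intro f.
  rewrite (stage_unfold W lt wf w). unfold stage_step. cbn.
  split; intros [[p [h [Hp Hj]]] | [Hlim [v [h Hv]]]].
  - left. exists p, h. split; auto. apply jump_Tneg_Tpos. auto.
  - right. split; auto. exists v, h. apply IH; auto.
  - left. exists p, h. split; auto. apply jump_Tneg_Tpos. auto.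
  - right. split; auto. exists v, h. apply IH; auto.
Qed.

Theorem mainTheorem5 (W : Type) (lt : W -> W -> Prop) (wf : well_founded lt)
    (lt_trans : forall x y z, lt x y -> lt y z -> lt x z)
    (lt_total : forall x y, lt x y \/ x = y \/ lt y x)
    (w : W) (phi : formula) :
  sentence phi ->
  Pi_holds phi ->
  consistent (stage lt wf w) ->
  holds (stage lt wf w) [phi] [fNT (gq phi)] /\
  holds (stage lt wf w) [fNT (gq phi)] [phi].
Proof.
  intros _ HPi Hcons.
  enough (Hiff : SK (stage lt wf w) phi <-> SK (stage lt wf w) (fNT (gq phi)))
    by (rewrite !holds_single; tauto).
  destruct HPi as [Hbp | Hbp]; apply Bset_code in Hbp.
  - apply (base_paradoxical_iff _ Hcons _ Hbp).
  - destruct (base_paradoxical_iff _ Hcons _ Hbp) as [_ Hneg].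
    rewrite neg_involutive in Hneg.
    rewrite Hneg, SK_T_gq, SK_NT_gq, stage_Tneg_Tpos.
    reflexivity.
Qed.
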